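(* Let $w:\{0,1\}^L\to\mathbb{R}_{\ge 0}$ be a generic fitness landscape inducing the standard staircase triangulation. (i) If the zero-string $0\cdots0$ is a local fitness minimum (all its Hamming neighbours have higher fitness), then it is the global minimum and every edge of the fitness graph is directed toward the endpoint with more $1$'s. (ii) If at most one of the $L$ Hamming neighbours of the zero-string has lower fitness than the zero-string, then the landscape has exactly one peak, and this peak is at Hamming distance at most $1$ from the one-string $1\cdots1$.
   Context: Genotypes are elements of $\{0,1\}^L$, identified with vertices of $[0,1]^L$. The triangulation induced by $w$ is the regular subdivision of $[0,1]^L$ obtained by projecting the upper faces of $\mathrm{conv}\{(g,w_g)\}\subset\mathbb{R}^{L+1}$; $w$ is generic if all $w_g$ are distinct and this subdivision is a triangulation. The fitness graph directs each cube edge toward the genotype of higher fitness; a peak is a genotype all of whose Hamming neighbours have strictly lower fitness. The standard staircase triangulation consists of the $L!$ simplices formed by the genotypes along a walk from $0\cdots0$ to $1\cdots1$ in which each step changes one $0$ into a $1$. *)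

From mathcomp Require Import all_boot all_order all_algebra all_fingroup.
From mathcomp Require Import reals.
Set Implicit Arguments. Unset Strict Implicit. Unset Printing Implicit Defensive.
Import Order.TTheory GRing.Theory Num.Theory.
Local Open Scope ring_scope.

Definition genotype (L : nat) := {ffun 'I_L -> bool}.

Definition coord {R : realType} {L : nat} (g : genotype L) (i : 'I_L) : R :=
  (g i : nat)%:R.

Definition aff {R : realType} {L : nat} (c : R) (a : 'I_L -> R) (g : genotype L) : R :=
  c + \sum_(i < L) a i * coord g i.

(* A maximal cell of the regular subdivision of [0,1]^L induced by w via the
   UPPER faces of conv{(g, w_g)}: its vertex set F is the set of genotypes whose
   lifts lie on a non-vertical supporting hyperplane (graph of an affine function
   h with h = w on F and h > w off F), and F is full-dimensional (affinely spans
   R^L: the only affine function vanishing on F is the zero function). *)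
Definition upper_cell {R : realType} {L : nat} (w : genotype L -> R)
    (F : {set genotype L}) : Prop :=
  (exists (c : R) (a : 'I_L -> R),
      (forall g, g \in F -> aff c a g = w g) /\
      (forall g, g \notin F -> w g < aff c a g)) /\
  (forall (c : R) (a : 'I_L -> R),
      (forall g, g \in F -> aff c a g = 0) -> c = 0 /\ forall i, a i = 0).

(* The k-th vertex of the staircase walk given by the permutation s:
   the coordinates s 0, ..., s (k-1) are set to 1. *)
Definition stair_vertex {L : nat} (s : {perm 'I_L}) (k : nat) : genotype L :=
  [ffun i => (s^-1)%g i < k]%N.

Definition stair_simplex {L : nat} (s : {perm 'I_L}) : {set genotype L} :=
  [set stair_vertex s (val k) | k : 'I_L.+1].

Definition is_stair_simplex {L : nat} (F : {set genotype L}) : Prop :=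
  exists s : {perm 'I_L}, F = stair_simplex s.

Definition induces_staircase {R : realType} {L : nat} (w : genotype L -> R) : Prop :=
  forall F : {set genotype L}, upper_cell w F <-> is_stair_simplex F.

(* generic: distinct values (the triangulation part is given by induces_staircase) *)
Definition distinct_values {R : realType} {L : nat} (w : genotype L -> R) : Prop :=
  injective w.

Definition hamming {L : nat} (g h : genotype L) : nat := #|[set i | g i != h i]|.
Definition neighbours {L : nat} (g h : genotype L) : bool := hamming g h == 1%N.
Definition num_ones {L : nat} (g : genotype L) : nat := #|[set i | g i]|.

Definition zero_string (L : nat) : genotype L := [ffun => false].
Definition one_string (L : nat) : genotype L := [ffun => true].

Definition is_peak {R : realType} {L : nat} (w : genotype L -> R) (g : genotype L) : Prop :=
  forall h, neighbours g h -> w h < w g.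

(* The staircase triangulation makes w strictly supermodular on every square face of the
   cube: if loci i <> j are 0 in g, some staircase simplex contains g, g+i and g+i+j but not
   g+j, and the affine function lifting that simplex obeys the parallelogram law, so
   w(g+i) + w(g+j) < w(g) + w(g+i+j).  Hence the gain of switching on a locus i only grows as
   other loci are switched on: if it is positive at 0...0, it is positive everywhere.
   In (i) every locus is such, so fitness increases along every edge toward more ones.
   In (ii) every locus outside a set T with |T| <= 1 is such, so every peak lies on the face
   where these loci are 1; that face has at most two vertices, adjacent, and the fitter one
   is the unique peak. *)

From Pilot Require Import Defs.
From mathcomp Require Import all_boot all_order all_algebra all_fingroup.
From mathcomp Require Import reals zify lra.
Import Order.TTheory GRing.Theory Num.Theory.
Set Implicit Arguments. Unset Strict Implicit.

Section Genotypes.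
Variable L : nat.
Implicit Types (g h : genotype L) (i j : 'I_L).

Definition raise g i : genotype L := [ffun x => (x == i) || g x].

Lemma raiseC g i j : raise (raise g i) j = raise (raise g j) i.
Proof. by apply/ffunP=> x; rewrite !ffunE orbCA. Qed.

Lemma raise_eq_self g i : (raise g i == g) = g i.
Proof.
apply/eqP/idP => [<-|gi]; first by rewrite ffunE eqxx.
by apply/ffunP=> x; rewrite ffunE; case: eqP => // ->.
Qed.

Lemma genotype_ind (P : genotype L -> Prop) :
  P (zero_string L) -> (forall g j, g j = false -> P g -> P (raise g j)) ->
  forall g, P g.
Proof.
move=> P0 PS g; have [n] := ubnP (num_ones g); elim: n g => // n IHn g ones_le.
case: (pickP g) => [j gj | g0]; last first.
  by have -> : g = zero_string L by apply/ffunP=> x; rewrite ffunE g0.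
pose g' : genotype L := [ffun x => (x != j) && g x].
have g'_lt : num_ones g' < num_ones g.
  apply/proper_card/properP; split; last by exists j; rewrite !inE ?ffunE ?eqxx.
  by apply/subsetP=> x; rewrite !inE ffunE => /andP[].
have -> : g = raise g' j by apply/ffunP=> x; rewrite !ffunE; case: eqP => [->|].
by apply: PS; [rewrite ffunE eqxx | exact: IHn (leq_trans g'_lt ones_le)].
Qed.

Lemma neighboursC g h : neighbours g h = neighbours h g.
Proof.
by rewrite /neighbours /hamming; congr (_ == 1); apply: eq_card => x; rewrite !inE eq_sym.
Qed.

Lemma neighbours_raise g i : g i = false -> neighbours g (raise g i).
Proof.
move=> gi; rewrite /neighbours /hamming (_ : [set x | _] = [set i]) ?cards1 //.
by apply/setP=> x; rewrite !inE ffunE; case: (eqVneq x i) => [->|]; rewrite ?gi //= eqxx.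
Qed.

Lemma neighbours_raiseE g h i : neighbours g h -> g i = false -> h i -> h = raise g i.
Proof.
move=> /cards1P[k diff_k] gi hi.
have ik : i = k by apply/set1P; rewrite -diff_k inE gi hi.
apply/ffunP=> x; rewrite ffunE; case: (eqVneq x i) => [->|nxi] //=.
have : x \notin [set x | g x != h x] by rewrite diff_k in_set1 -ik.
by rewrite inE negbK => /eqP.
Qed.

Lemma neighbours_ones_lt g h : neighbours g h -> num_ones g < num_ones h ->
  exists2 i, g i = false & h = raise g i.
Proof.
move=> ngh ones_lt.
have [i /andP[/negbTE gi hi]] : exists i, ~~ g i && h i.
  apply/existsP; apply: contraLR ones_lt; rewrite negb_exists -leqNgt => /forallP sub.
  by apply/subset_leq_card/subsetP=> x; rewrite !inE; move: (sub x); case: (g x) (h x) => [] [].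
by exists i; last exact: neighbours_raiseE ngh gi hi.
Qed.

Lemma hamming_eq0 g h : (hamming g h == 0) = (g == h).
Proof.
rewrite /hamming cards_eq0; apply/eqP/eqP => [/setP diff0 | ->]; last first.
  by apply/setP=> x; rewrite !inE eqxx.
by apply/ffunP=> x; move: (diff0 x); rewrite !inE => /negbFE/eqP.
Qed.

Lemma neighbours_neq g h : neighbours g h -> g != h.
Proof. by rewrite -hamming_eq0 => /eqP->. Qed.

Definition one_face (T : {set 'I_L}) : {set genotype L} :=
  [set q : genotype L | [forall i, (i \notin T) ==> q i]].

Lemma one_string_in_face T : one_string L \in one_face T.
Proof. by rewrite inE; apply/forallP=> i; rewrite ffunE implybT. Qed.

Lemma hamming_one_face T g h : g \in one_face T -> h \in one_face T -> hamming g h <= #|T|.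
Proof.
rewrite !inE => /forallP gT /forallP hT; apply/subset_leq_card/subsetP=> x; rewrite inE.
by apply: contraR => xT; rewrite (implyP (gT x) xT) (implyP (hT x) xT).
Qed.

End Genotypes.

Lemma stair_vertexE L (s : {perm 'I_L}) k x : stair_vertex s k x = ((s^-1)%g x < k).
Proof. by rewrite ffunE. Qed.

Lemma stair_simplex_chain L (s : {perm 'I_L}) p q :
  p \in stair_simplex s -> q \in stair_simplex s ->
  (forall x, p x -> q x) \/ (forall x, q x -> p x).
Proof.
move=> /imsetP[m _ ->] /imsetP[n _ ->].
have mono a b : a <= b -> forall x, stair_vertex s a x -> stair_vertex s b x.
  by move=> ab x; rewrite !stair_vertexE => /leq_trans; apply.
by case: (leqP m n) => [mn | /ltnW nm]; [left | right]; exact: mono.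
Qed.

Section LevelStaircase.
Variables (L : nat) (c : 'I_L -> nat).

(* orders the loci lexicographically by (level, index) *)
Let key (x : 'I_L) := c x * L + x.

Let key_inj : injective key.
Proof.
move=> x y /(congr1 (modn^~ L)).
by rewrite !modnMDl !modn_small // => /val_inj.
Qed.

Let key_lt x y : c x < c y -> key x < key y.
Proof. by move=> lt_c; have := ltn_ord x; rewrite /key; nia. Qed.

Let rank x := #|[set y | key y < key x]|.

Let rank_lt x y : key x < key y -> rank x < rank y.
Proof.
move=> lt_xy; apply/proper_card/properP; split; last by exists x; rewrite !inE ?ltnn.
by apply/subsetP=> z; rewrite !inE => /ltn_trans; apply.
Qed.

Let rank_ord x : rank x < L.
Proof.
rewrite -[L]card_ord; apply/proper_card/properP; split; first exact/subsetP.
by exists x; rewrite !inE ?ltnn.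
Qed.

Let rank_inj : injective (fun x => Ordinal (rank_ord x)).
Proof.
move=> x y [] eq_r; apply: key_inj.
by case: (ltngtP (key x) (key y)) => // /rank_lt; rewrite eq_r ltnn.
Qed.

Definition level_perm : {perm 'I_L} := (perm rank_inj)^-1%g.

Lemma level_vertex_in n : [ffun x => c x < n] \in stair_simplex level_perm.
Proof.
have card_lt : #|[set y | c y < n]| < L.+1 by rewrite ltnS -[X in _ <= X]card_ord max_card.
apply/imsetP; exists (Ordinal card_lt) => //; apply/ffunP=> x.
rewrite stair_vertexE invgK permE ffunE /=; apply/esym.
case: (ltnP (c x) n) => [cx_lt | cx_ge].
- apply/proper_card/properP; split; last by exists x; rewrite !inE ?cx_lt ?ltnn.
  apply/subsetP=> y; rewrite !inE; apply: contraTT; rewrite -!leqNgt => ge_n.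
  exact/ltnW/key_lt/(leq_trans cx_lt).
- apply/negbTE; rewrite -leqNgt; apply/subset_leq_card/subsetP=> y; rewrite !inE => lt_n.
  exact/key_lt/(leq_trans lt_n).
Qed.

End LevelStaircase.

Lemma stair_simplex_square L (g : genotype L) i j :
  i != j -> g i = false -> g j = false ->
  exists s : {perm 'I_L}, [/\ g \in stair_simplex s, raise g i \in stair_simplex s,
    raise (raise g i) j \in stair_simplex s & raise g j \notin stair_simplex s].
Proof.
move=> nij gi gj.
pose c x := if g x then 0 else if x == i then 1 else if x == j then 2 else 3.
have levelP n h : [ffun x => c x < n] = h -> h \in stair_simplex (level_perm c).
  by move<-; exact: level_vertex_in.
have [g_in gi_in gij_in] : [/\ g \in stair_simplex (level_perm c),
    raise g i \in stair_simplex (level_perm c)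
  & raise (raise g i) j \in stair_simplex (level_perm c)].
  by split; [apply: (levelP 1) | apply: (levelP 2) | apply: (levelP 3)];
    apply/ffunP=> x; rewrite !ffunE /c; case: (g x) (x == i) (x == j) => [] [] [].
exists (level_perm c); split=> //; apply/negP=> /(stair_simplex_chain gi_in) [sub | sub].
- by move: (sub i); rewrite !ffunE eqxx gi (negbTE nij) => /(_ isT).
- by move: (sub j); rewrite !ffunE eqxx gj eq_sym (negbTE nij) => /(_ isT).
Qed.

Local Open Scope ring_scope.

Lemma aff_parallelogram (R : realType) L (c : R) (a : 'I_L -> R) (g : genotype L) i j :
  i != j -> aff c a g + aff c a (raise (raise g i) j) = aff c a (raise g i) + aff c a (raise g j).
Proof.
move=> nij; rewrite /aff addrACA [RHS]addrACA -!big_split /=; congr (_ + _).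
apply: eq_bigr => x _; rewrite -!mulrDr /Defs.coord !ffunE -!natrD; congr (_ * _%:R).
case: (eqVneq x i) => [->|_]; first by rewrite (negbTE nij) addnC.
by case: (x == j); case: (g x).
Qed.

Section StaircaseLandscape.
Variables (R : realType) (L : nat) (w : genotype L -> R).
Hypothesis w_inj : injective w.
Hypothesis w_stair : induces_staircase w.
Implicit Types (g : genotype L) (i j : 'I_L).

Lemma staircase_square_lt g i j : i != j -> g i = false -> g j = false ->
  w (raise g i) + w (raise g j) < w g + w (raise (raise g i) j).
Proof.
move=> nij gi gj; have [s [g_in gi_in gij_in gj_out]] := stair_simplex_square nij gi gj.
have [[c [a [on_cell below]]] _] := (w_stair (stair_simplex s)).2 (ex_intro _ s erefl).
rewrite -(on_cell _ g_in) -(on_cell _ gij_in) aff_parallelogram // (on_cell _ gi_in) ltrD2l.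
exact: below.
Qed.

Lemma staircase_increasing i : w (zero_string L) < w (raise (zero_string L) i) ->
  forall g, g i = false -> w g < w (raise g i).
Proof.
move=> w0_lt; apply: genotype_ind => [_ //|g j gj IHg].
rewrite ffunE => /norP[nij /negbTE gi].
by have := staircase_square_lt nij gi gj; rewrite raiseC; have := IHg gi; lra.
Qed.

Let z := zero_string L.

Lemma zero_string_raise_neighbour i : neighbours z (raise z i).
Proof. by apply: neighbours_raise; rewrite ffunE. Qed.

Section ZeroLocalMin.
Hypothesis z_min : forall h, neighbours z h -> w z < w h.

Lemma zero_local_min_increasing i g : g i = false -> w g < w (raise g i).
Proof. exact: staircase_increasing (z_min (zero_string_raise_neighbour i)) g. Qed.

Lemma zero_local_min_global g : g != z -> w z < w g.
Proof.
have z_le h : w z <= w h.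
  elim/genotype_ind: h => // h j hj /le_trans; apply.
  exact/ltW/zero_local_min_increasing.
by move=> ngz; rewrite lt_neqAle z_le andbT; apply: contra ngz => /eqP/w_inj ->.
Qed.

Lemma zero_local_min_edges_up g h :
  neighbours g h -> (num_ones g < num_ones h)%N -> w g < w h.
Proof.
by move=> ngh /(neighbours_ones_lt ngh)[i gi ->]; exact: zero_local_min_increasing.
Qed.

End ZeroLocalMin.

Lemma card_down_dirs_le :
  (#|[set i | (w (raise z i) < w z)%R]| <= #|[set h | neighbours z h && (w h < w z)%R]|)%N.
Proof.
have raise_inj : injective (raise z).
  by move=> i j /ffunP/(_ i); rewrite !ffunE eqxx !orbF => /esym/eqP.
rewrite -(card_imset _ raise_inj); apply/subset_leq_card/subsetP=> h /imsetP[i].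
by rewrite !inE => lt_i ->; rewrite zero_string_raise_neighbour.
Qed.

Lemma increasing_off_down_dirs i : i \notin [set k | w (raise z k) < w z] ->
  forall g, g i = false -> w g < w (raise g i).
Proof.
rewrite inE -leNgt le_eqVlt => /orP[/eqP/w_inj eq_z | //]; last exact: staircase_increasing.
by move: (raise_eq_self z i); rewrite -eq_z eqxx ffunE.
Qed.

End StaircaseLandscape.

Section DirectionalPeaks.
Variables (R : realType) (L : nat) (w : genotype L -> R) (T : {set 'I_L}).
Hypothesis w_inj : injective w.
Hypothesis w_up : forall i, i \notin T -> forall g : genotype L, g i = false -> w g < w (raise g i).

Lemma peak_in_one_face q : is_peak w q -> q \in one_face T.
Proof.
move=> q_peak; rewrite inE; apply/forallP=> i; apply/implyP=> iT.
apply/negPn/negP=> /negbTE qi.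
by have := lt_trans (w_up iT qi) (q_peak _ (neighbours_raise qi)); rewrite ltxx.
Qed.

Lemma one_face_max_peak p :
  p \in one_face T -> {in one_face T, forall q, w q <= w p} -> is_peak w p.
Proof.
move=> pT p_max h nph; have [hT | hT] := boolP (h \in one_face T).
  rewrite lt_neqAle p_max // andbT; apply: contraTneq (neighbours_neq nph).
  by move=> /w_inj ->; rewrite eqxx.
move: hT; rewrite inE negb_forall => /existsP[i]; rewrite negb_imply => /andP[iT /negbTE hi].
have pi : p i by move: pT; rewrite inE => /forallP/(_ i); rewrite iT.
by rewrite (neighbours_raiseE _ hi pi) ?w_up // neighboursC.
Qed.

Lemma one_face_unique_peak : (#|T| <= 1)%N ->
  exists p, [/\ is_peak w p, forall q, is_peak w q -> q = p & (hamming p (one_string L) <= 1)%N].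
Proof.
move=> T_le1.
have near p q : p \in one_face T -> q \in one_face T -> (hamming p q <= 1)%N.
  by move=> pT qT; exact: leq_trans (hamming_one_face pT qT) T_le1.
have [p pT p_max] := @arg_maxP _ _ _ (one_string L) (mem (one_face T)) w (one_string_in_face T).
exists p; split; first exact: one_face_max_peak.
  move=> q q_peak; have qT := peak_in_one_face q_peak.
  apply/eqP; apply: contraTT (p_max _ qT) => nqp.
  have nqp1 : neighbours q p by rewrite /neighbours eqn_leq near // lt0n hamming_eq0.
  by rewrite -ltNge q_peak.
exact: near (one_string_in_face T).
Qed.

End DirectionalPeaks.

Theorem mainTheorem10 (R : realType) (L : nat) (w : genotype L -> R) :
  (forall g, 0 <= w g) ->
  distinct_values w ->
  induces_staircase w ->
  (* (i) *)
  ((forall h, neighbours (zero_string L) h -> w (zero_string L) < w h) ->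
     (forall g, g != zero_string L -> w (zero_string L) < w g) /\
     (forall g h, neighbours g h -> (num_ones g < num_ones h)%N -> w g < w h)) /\
  (* (ii) *)
  ((#|[set h | neighbours (zero_string L) h && (w h < w (zero_string L))%R]| <= 1)%N ->
     exists p, [/\ is_peak w p,
                   (forall q, is_peak w q -> q = p) &
                   (hamming p (one_string L) <= 1)%N]).
Proof.
move=> _ w_inj w_stair; split.
  move=> z_min; split; first exact: zero_local_min_global.
  exact: zero_local_min_edges_up.
move=> down_le1; apply: one_face_unique_peak w_inj (increasing_off_down_dirs w_inj w_stair) _.
exact: leq_trans (card_down_dirs_le w) down_le1.
Qed.
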